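(* Let $L=L(f,0)$ be a $3\mathbb Z$-periodic Leibniz algebra over a field $K$ with structure matrix $(\alpha_{ij})_{i,j\in\{0,1,2\}}$. Then $L$ is right nilpotent if and only if $\alpha_{i0}=0$ for $i=0,1,2$, $\alpha_{01}\alpha_{11}\alpha_{21}=\alpha_{02}\alpha_{12}\alpha_{22}=0$, and $\alpha_{01}\alpha_{12}=\alpha_{11}\alpha_{22}=\alpha_{21}\alpha_{02}=0$.
   Context: $L(f,0)$ is the $K$-algebra with basis $\{e_a:a\in\mathbb Z\}$ and multiplication $e_ae_b=f(a,b)e_{a+b}$; it is $3\mathbb Z$-periodic with structure matrix $(\alpha_{ij})$ if $f(a,b)=\alpha_{a\bmod 3,\,b\bmod 3}$; it is Leibniz if $x(yz)=(xy)z-(xz)y$ for all $x,y,z$. An algebra is right nilpotent if there is $N$ with $(\cdots((x_1x_2)x_3)\cdots)x_N=0$ for all $x_1,\dots,x_N$. *)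

From HB Require Import structures.
From mathcomp Require Import all_boot all_order all_algebra.
Set Implicit Arguments. Unset Strict Implicit. Unset Printing Implicit Defensive.
Import Order.TTheory GRing.Theory Num.Theory.
Local Open Scope ring_scope.

(* An element of L(f,0) is a finite linear combination sum_k c_k e_{a_k},
   represented by the list of pairs (a_k, c_k).  Two representations denote
   the same element iff their coefficient functions agree. *)
Definition lelt (K : fieldType) := seq (int * K).

Definition lcoef (K : fieldType) (x : lelt K) (c : int) : K :=
  \sum_(p <- x) (p.1 == c)%:R * p.2.

Definition lbasis (K : fieldType) (a : int) : lelt K := [:: (a, 1)].

(* product, bilinear extension of e_a e_b = f(a,b) e_{a+b} *)
Definition lmul (K : fieldType) (f : int -> int -> K) (x y : lelt K) : lelt K :=
  [seq (p.1 + q.1, f p.1 q.1 * p.2 * q.2) | p <- x, q <- y].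

Definition lsub (K : fieldType) (x y : lelt K) : lelt K :=
  x ++ [seq (q.1, - q.2) | q <- y].

Definition leq_el (K : fieldType) (x y : lelt K) : Prop :=
  forall c : int, lcoef x c = lcoef y c.

Definition is_leibniz (K : fieldType) (f : int -> int -> K) : Prop :=
  forall x y z : lelt K,
    leq_el (lmul f x (lmul f y z))
           (lsub (lmul f (lmul f x y) z) (lmul f (lmul f x z) y)).

(* right nilpotent: some N such that every left-normed product
   (...((x_0 x_1) x_2)...) x_N of N+1 elements vanishes
   (here x_0 = x and xs = [x_1; ...; x_N]); i.e. the paper's N >= 1. *)
Definition right_nilpotent (K : fieldType) (f : int -> int -> K) : Prop :=
  exists N : nat, forall (x : lelt K) (xs : seq (lelt K)),
    size xs = N -> leq_el (foldl (lmul f) x xs) [::].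

Definition idx3 (a : int) : 'I_3 := inord `|(a %% 3)%Z|%N.

Definition o0 : 'I_3 := @Ordinal 3 0 isT.
Definition o1 : 'I_3 := @Ordinal 3 1 isT.
Definition o2 : 'I_3 := @Ordinal 3 2 isT.

Definition periodic3 (K : fieldType) (f : int -> int -> K) (A : 'M[K]_3) : Prop :=
  forall a b : int, f a b = A (idx3 a) (idx3 b).

(* In the basis (e_a), a left-normed product e_a e_b1 ... e_bn equals
   w_f(a; b1..bn) e_(a+b1+...+bn), where the path weight w_f is the product
   of the structure constants met along the path a, a+b1, a+b1+b2, ...; by
   bilinearity every term of a left-normed product of n+1 arbitrary elements
   is a scalar multiple of such a weight.  Hence L is right nilpotent iff all
   path weights of some fixed length N vanish (Part 1, any f).
   When f is 3Z-periodic, path weights only depend on residues mod 3, so they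
   become weights of paths in Z/3 read off the matrix A (Part 2).
   For such matrix paths (Part 3), a path whose steps sum to 0 is a cycle,
   and repeating it shows that its weight is nilpotent in K, hence zero: the
   six conditions are precisely the weights of the cycles [0], [1;1;1],
   [2;2;2] and [1;2] (from the three starting points).  Conversely, under
   these conditions every path with three steps contains one of these short
   cycles, so all weights of length 3 vanish. *)
From HB Require Import structures.
From mathcomp Require Import all_boot all_order all_algebra.
From mathcomp Require Import ring zify.
Import GRing.Theory Num.Theory.
Local Open Scope ring_scope.

Section PathWeights.
Context {K : fieldType} (f : int -> int -> K).

(* Weight of the path a -> a + b1 -> a + b1 + b2 -> ... : the structure
   constant of the left-normed product e_a e_b1 ... e_bn. *)
Fixpoint path_weight (a : int) (bs : seq int) : K :=
  if bs is b :: bs' then f a b * path_weight (a + b) bs' else 1.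

Lemma path_weight_rcons a bs b :
  path_weight a (rcons bs b) = path_weight a bs * f (a + \sum_(c <- bs) c) b.
Proof.
elim: bs a => [|c bs IH] a /=; first by rewrite big_nil addr0 mul1r mulr1.
by rewrite IH big_cons addrA mulrA.
Qed.

Lemma lcoef_single (a : int) (s : K) : lcoef [:: (a, s)] a = s.
Proof. by rewrite /lcoef big_cons big_nil eqxx mul1r addr0. Qed.

Lemma lmul_basis_seq a s bs :
  foldl (lmul f) [:: (a, s)] (map (@lbasis K) bs)
  = [:: (a + \sum_(b <- bs) b, s * path_weight a bs)].
Proof.
elim: bs a s => [|b bs IH] a s /=; first by rewrite big_nil addr0 mulr1.
by rewrite IH big_cons addrA; congr [:: (_, _)] => /=; ring.
Qed.

Lemma lnprod_term x xs p : p \in foldl (lmul f) x xs ->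
  exists a bs s,
    [/\ size bs = size xs, p.1 = a + \sum_(b <- bs) b & p.2 = s * path_weight a bs].
Proof.
elim/last_ind: xs p => [|xs y IH] p /=.
  by move=> _; exists p.1, [::], p.2; rewrite big_nil addr0 mulr1.
rewrite foldl_rcons => /allpairsP [[q r] /= [/IH [a [bs [s [hs hq1 hq2]]]] _ ->]].
exists a, (rcons bs r.1), (s * r.2).
rewrite !size_rcons hs path_weight_rcons big_rcons /= hq1 hq2 addrA.
by split=> //; ring.
Qed.

Definition path_weights_vanish (N : nat) : Prop :=
  forall a bs, size bs = N -> path_weight a bs = 0.

Lemma right_nilpotentE : right_nilpotent f <-> exists N, path_weights_vanish N.
Proof.
split=> -[N hN]; exists N.
- move=> a bs hs; have := hN (lbasis K a) (map (@lbasis K) bs).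
  rewrite size_map /lbasis lmul_basis_seq mul1r => /(_ hs (a + \sum_(b <- bs) b)).
  by rewrite lcoef_single /lcoef big_nil.
- move=> x xs hs c; rewrite [RHS]/lcoef big_nil /lcoef big_seq big1 // => p.
  by move=> /lnprod_term [a [bs [s [hbs _ ->]]]]; rewrite hN ?hbs // !mulr0.
Qed.

End PathWeights.

Section MatrixWeights.
Context {K : fieldType} {n : nat} (A : 'M[K]_n.+1).

Fixpoint mweight (i : 'I_n.+1) (js : seq 'I_n.+1) : K :=
  if js is j :: js' then A i j * mweight (i + j) js' else 1.

Lemma mweight_cat i s1 s2 :
  mweight i (s1 ++ s2) = mweight i s1 * mweight (i + \sum_(j <- s1) j) s2.
Proof.
elim: s1 i => [|j s1 IH] i /=; first by rewrite big_nil addr0 mul1r.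
by rewrite IH big_cons addrA mulrA.
Qed.

Lemma mweight_cycle_pow i c m : \sum_(j <- c) j = 0 ->
  mweight i (flatten (nseq m c)) = mweight i c ^+ m.
Proof.
move=> hc; elim: m => [|m IH] /=; first by rewrite expr0.
by rewrite mweight_cat hc addr0 IH exprS.
Qed.

Definition weights_vanish (N : nat) : Prop :=
  forall i js, size js = N -> mweight i js = 0.

(* If all weights of length N vanish, so do all cycle weights, because K has
   no nonzero nilpotents. *)
Lemma cycle_weight_eq0 N : weights_vanish N ->
  forall i c, c != [::] -> \sum_(j <- c) j = 0 -> mweight i c = 0.
Proof.
move=> hN i c hc hsum.
have long_eq0 js : (N <= size js)%N -> mweight i js = 0.
  move=> hs; rewrite -(cat_take_drop N js) mweight_cat hN ?mul0r //.
  by rewrite size_takel.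
have N_gt0 : (0 < N)%N.
  by case: N hN {long_eq0} => // /(_ i [::] erefl) /eqP; rewrite oner_eq0.
have size_rep : size (flatten (nseq N c)) = (N * size c)%N.
  by elim: (N) => //= m IH; rewrite size_cat IH mulSn.
have := long_eq0 (flatten (nseq N c)).
rewrite size_rep mweight_cycle_pow // leq_pmulr ?lt0n ?size_eq0 //.
by move=> /(_ isT) /eqP; rewrite expf_eq0 N_gt0 => /eqP.
Qed.

End MatrixWeights.

Lemma idx3_val a : (idx3 a : nat) = `|(a %% 3)%Z|%N.
Proof.
rewrite /idx3 inordK //; have h3 : (0 < 3 :> int) by [].
by have := ltz_pmod a h3; have := modz_ge0 a (lt0r_neq0 h3); lia.
Qed.

Lemma idx3D a b : idx3 (a + b) = idx3 a + idx3 b.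
Proof. by apply: val_inj; rewrite /= !idx3_val; lia. Qed.

Lemma idx3_ord (i : 'I_3) : idx3 (i : nat)%:Z = i.
Proof. by apply: val_inj; rewrite /= idx3_val; have := ltn_ord i; lia. Qed.

Section Periodic.
Context {K : fieldType} {f : int -> int -> K} {A : 'M[K]_3} (hper : periodic3 f A).

Lemma path_weight_periodic a bs :
  path_weight f a bs = mweight A (idx3 a) (map idx3 bs).
Proof. by elim: bs a => [|b bs IH] a //=; rewrite hper IH idx3D. Qed.

(* idx3 is onto, so the two kinds of weights vanish for the same lengths. *)
Lemma path_weights_vanishE N : path_weights_vanish f N <-> weights_vanish A N.
Proof.
split=> hN i js hs; last by rewrite path_weight_periodic hN ?size_map.
have := hN (i : nat)%:Z [seq (nat_of_ord j)%:Z | j <- js]; rewrite size_map.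
by rewrite path_weight_periodic idx3_ord -map_comp (eq_map idx3_ord) map_id => ->.
Qed.

End Periodic.

Section ThreeCycles.
Context {K : fieldType}.

Lemma I3_cases (i : 'I_3) : [\/ i = o0, i = o1 | i = o2].
Proof.
by case: i => -[|[|[|//]]] hi; [apply: Or31 | apply: Or32 | apply: Or33];
  apply: val_inj.
Qed.

Lemma addI3E :
  (o0 + o1 = o1 :> 'I_3) * (o0 + o2 = o2 :> 'I_3) * (o1 + o1 = o2 :> 'I_3) *
  (o1 + o2 = o0 :> 'I_3) * (o2 + o1 = o0 :> 'I_3) * (o2 + o2 = o1 :> 'I_3).
Proof. by do !split; apply: val_inj. Qed.

Lemma rotate3 {x y z : K} : x * y * z = 0 -> y * z * x = 0.
Proof. by move=> hxyz; rewrite mulrC mulrA. Qed.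

Definition structure_conditions (A : 'M[K]_3) : Prop :=
  [/\ forall i : 'I_3, A i o0 = 0,
      A o0 o1 * A o1 o1 * A o2 o1 = 0,
      A o0 o2 * A o1 o2 * A o2 o2 = 0 &
      [/\ A o0 o1 * A o1 o2 = 0, A o1 o1 * A o2 o2 = 0 & A o2 o1 * A o0 o2 = 0]].

Lemma structure_conditions_of_cycles (A : 'M[K]_3) :
  (forall i c, c != [::] -> \sum_(j <- c) j = 0 -> mweight A i c = 0) ->
  structure_conditions A.
Proof.
move=> cycle; split.
- move=> i; have := cycle i [:: o0] isT; rewrite /= mulr1; apply.
  by rewrite big_cons big_nil; apply: val_inj.
- have := cycle o0 [:: o1; o1; o1] isT; rewrite /= !addI3E mulr1 !mulrA; apply.
  by rewrite !big_cons big_nil; apply: val_inj.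
- have := cycle o0 [:: o2; o2; o2] isT; rewrite /= !addI3E mulr1 !mulrA mulrAC; apply.
  by rewrite !big_cons big_nil; apply: val_inj.
have cycle12 i : A i o1 * A (i + o1) o2 = 0.
  have := cycle i [:: o1; o2] isT; rewrite /= mulr1; apply.
  by rewrite !big_cons big_nil; apply: val_inj.
by split; [have := cycle12 o0 | have := cycle12 o1 | have := cycle12 o2]; rewrite !addI3E.
Qed.

Lemma short_cycles_vanish (A : 'M[K]_3) : structure_conditions A ->
  [/\ forall i, A i o0 = 0,
      forall i, A i o1 * A (i + o1) o2 = 0,
      forall i, A i o2 * A (i + o2) o1 = 0,
      forall i, A i o1 * A (i + o1) o1 * A (i + o1 + o1) o1 = 0 &
      forall i, A i o2 * A (i + o2) o2 * A (i + o2 + o2) o2 = 0].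
Proof.
move=> [c0 c111 c222 [c12_0 c12_1 c12_2]].
have c222' : A o0 o2 * A o2 o2 * A o1 o2 = 0 by rewrite mulrAC.
(* [2;1] reverses the product of some [1;2]; the other 3-cycles are rotations. *)
split=> // i; case: (I3_cases i) => ->; rewrite !addI3E //.
- by rewrite mulrC.
- by rewrite mulrC.
- by rewrite mulrC.
- exact: rotate3 c111.
- exact: rotate3 (rotate3 c111).
- exact: rotate3 (rotate3 c222').
- exact: rotate3 c222'.
Qed.

(* A path of three steps either uses the step 0, or has two consecutive
   steps {1,2} (a 2-cycle), or repeats one nonzero step (a 3-cycle). *)
Lemma weights3_vanish (A : 'M[K]_3) :
  structure_conditions A -> weights_vanish A 3.
Proof.
move=> /short_cycles_vanish [c0 c12 c21 c111 c222] i [|j [|k [|l [|//]]]] // _ /=.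
rewrite mulr1 mulrA.
case: (I3_cases j) => ->; case: (I3_cases k) => ->; case: (I3_cases l) => ->;
  rewrite ?c0 ?mulr0 ?mul0r ?c111 ?c222 ?c12 ?c21 ?mul0r //;
  by rewrite -mulrA ?c12 ?c21 mulr0.
Qed.

End ThreeCycles.

Theorem corollary4p8 (K : fieldType) (f : int -> int -> K) (A : 'M[K]_3)
    (hper : periodic3 f A) (hleib : is_leibniz f) :
  right_nilpotent f <->
  [/\ forall i : 'I_3, A i o0 = 0,
      A o0 o1 * A o1 o1 * A o2 o1 = 0,
      A o0 o2 * A o1 o2 * A o2 o2 = 0 &
      [/\ A o0 o1 * A o1 o2 = 0, A o1 o1 * A o2 o2 = 0 & A o2 o1 * A o0 o2 = 0]].
Proof.
apply: (iff_trans (right_nilpotentE f)).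
have weightsE : (exists N, path_weights_vanish f N) <-> exists N, weights_vanish A N.
  by split=> -[N hN]; exists N; apply/(path_weights_vanishE hper).
apply: (iff_trans weightsE); split.
- by move=> [N /cycle_weight_eq0 hcyc]; apply: structure_conditions_of_cycles.
- by move=> hA; exists 3%N; apply: weights3_vanish.
Qed.
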